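(* Let $1\le K<d$ be integers and $T_\lambda$ as below. There exists $\bar\lambda<1$ such that for all $\lambda\in(\bar\lambda,1)$ the equation $T_\lambda(u)=u$ has a solution in $(1,\infty)$. Letting $u_\lambda$ denote the minimal solution in $[1,\infty)$ for $\lambda\in(\bar\lambda,1)$: (a) $\lim_{\lambda\to1^-}u_\lambda=1$; (b) with $h_\lambda(x)=\frac{u_\lambda-T_\lambda(u_\lambda-x)}{x}$, we have $\lim_{\varepsilon\to0^+}\lim_{\lambda\to1^-}h_\lambda(\varepsilon)=\frac dK$.
   Context: $T_\lambda(u)=\frac{\lambda}{K}\sum_{j=0}^{K-1}(K-j)\binom{d}{j}u^{d-j}(1-u)^j$ for $u\in[0,\infty)$, $\lambda\in(0,1)$. *)

From HB Require Import structures.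
From mathcomp Require Import all_boot all_order all_algebra.
From mathcomp Require Import all_classical all_reals all_analysis.
Set Implicit Arguments. Unset Strict Implicit. Unset Printing Implicit Defensive.
Import Order.TTheory GRing.Theory Num.Theory.
Import numFieldNormedType.Exports.
Local Open Scope ring_scope.

Definition Tl {R : realType} (K d : nat) (lam u : R) : R :=
  lam / K%:R * \sum_(j < K) ((K - j)%:R * 'C(d, j)%:R * u ^+ (d - j) * (1 - u) ^+ j).

Definition is_min_sol {R : realType} (K d : nat) (lam m : R) : Prop :=
  1 <= m /\ Tl K d lam m = m /\ (forall v : R, 1 <= v -> Tl K d lam v = v -> m <= v).

Definition hl {R : realType} (K d : nat) (lam ul x : R) : R :=
  (ul - Tl K d lam (ul - x)) / x.

From HB Require Import structures.
From mathcomp Require Import all_boot all_order all_algebra.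
From mathcomp Require Import all_classical all_reals all_analysis.
From mathcomp Require Import lra.
Set Implicit Arguments. Unset Strict Implicit. Unset Printing Implicit Defensive.
Import Order.TTheory GRing.Theory Num.Theory.
Import numFieldNormedType.Exports.
Local Open Scope classical_set_scope.
Local Open Scope ring_scope.

(* Writing T_lambda(u) = lambda * F(u) with the polynomial
   F(u) = (1/K) sum_{j<K} (K-j) C(d,j) u^(d-j) (1-u)^j, everything rests on
   two facts about F at u = 1: F(1) = 1 and F'(1) = d/K > 1.
   - Since F'(1) > 1, arbitrarily close to the right of 1 there are points u1
     with u1 < F(u1).  For lambda in (u1/F(u1), 1) the map lambda * F lies
     below the diagonal at 1 and above it at u1, so by the intermediate value
     theorem it has a fixed point in (1, u1].  Fixed-point sets of continuous
     maps are closed, hence the infimum of the fixed points in [1, oo) is the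
     minimal solution u_lambda; squeezing 1 <= u_lambda <= u1 gives (a).
   - For fixed eps, h_lambda(eps) -> (1 - F(1-eps))/eps as lambda -> 1- by
     continuity and (a); this left difference quotient of F at 1 tends to
     F'(1) = d/K as eps -> 0+, which is (b). *)

Section RealFacts.
Variable R : realType.
Implicit Types (f : R -> R) (a b : R).

Lemma diff_quotient_cvg f a : derivable f a 1 ->
  h^-1 * (f (a + h) - f a) @[h --> 0^'] --> 'D_1 f a.
Proof.
move=> df; apply: cvg_trans df; apply: near_eq_cvg; near=> h.
by rewrite /= -[h%:A]/(h * 1) mulr1 [h + a]addrC.
Unshelve. all: by end_near. Qed.

Lemma left_diff_quotient_cvg f a : derivable f a 1 ->
  (f a - f (a - h)) / h @[h --> 0^'+] --> 'D_1 f a.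
Proof.
move=> /diff_quotient_cvg /cvg_dnbhs_at_left /cvg_at_leftNP; rewrite oppr0.
by apply: cvg_trans; apply: near_eq_cvg; near=> h; rewrite /= invrN mulNr -mulrN opprB mulrC.
Unshelve. all: by end_near. Qed.

Lemma above_diagonal_near f a : f a = a -> derivable f a 1 -> 1 < 'D_1 f a ->
  forall del, 0 < del -> exists u, [/\ a < u, u < a + del & u < f u].
Proof.
move=> fa df D1 del del0.
have slope : \forall h \near 0^'+, 1 < h^-1 * (f (a + h) - f a).
  exact: cvgr_gt (cvg_dnbhs_at_right (diff_quotient_cvg df)) _ D1.
have [h [h0 hdel fah]] : exists h, [/\ 0 < h, h < del & 1 < h^-1 * (f (a + h) - f a)].
  apply: (@filter_ex _ (0:R)^'+); near=> h; split; [near: h; exact: nbhs_right_gt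
    | near: h; exact: nbhs_right_lt | near: h; exact: slope].
exists (a + h); split; [by rewrite ltrDl | by rewrite ltrD2l |].
move: fah; rewrite fa mulrC ltr_pdivlMr // mul1r; lra.
Unshelve. all: by end_near. Qed.

Lemma fixed_point_between f a b : continuous f -> a <= b -> f a < a -> b < f b ->
  exists u, [/\ a < u, u <= b & f u = u].
Proof.
move=> fc ab fa fb.
have gc : {within `[a, b], continuous (fun u => f u - u)}.
  by apply: continuous_subspaceT => x; apply: cvgB; [exact: fc | exact: cvg_id].
have sign : Num.min (f a - a) (f b - b) <= 0 <= Num.max (f a - a) (f b - b).
  rewrite ge_min le_max; apply/andP; split; apply/orP; [left | right].
  - by rewrite subr_le0 ltW.
  - by rewrite subr_ge0 ltW.
have [u] := IVT ab gc sign.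
rewrite in_itv /= => /andP [au ub] /eqP; rewrite subr_eq0 => /eqP fu.
exists u; split => //; rewrite lt_neqAle au andbT; apply/eqP => ea.
by move: fa; rewrite ea fu ltxx.
Qed.

(* The fixed points of a continuous f in [a, oo) form a closed set, so if
   there is one there is a least one (the infimum of that set). *)
Lemma least_fixed_point f a : continuous f -> (exists u, a <= u /\ f u = u) ->
  exists m, [/\ a <= m, f m = m & forall v, a <= v -> f v = v -> m <= v].
Proof.
move=> fc [u [au fu]].
pose S := [set v | a <= v] `&` (fun v => f v - v) @^-1` [set 0].
have Su : S u by split => //=; rewrite fu subrr.
have Sclosed : closed S.
  apply: closedI; first exact: closed_ge.
  apply: preimage_closed; last exact: closed_eq.
  by move=> x _; apply: cvgB; [exact: fc | exact: cvg_id].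
have Slb : has_lbound S by exists a => v [].
have Sinf : S (inf S).
  apply: itv_closed_infimums => //; first by exists u.
  split; first by move=> v Sv; exact: ge_inf.
  by move=> l lS; apply: lb_le_inf => //; exists u.
case: Sinf => /= am /eqP; rewrite subr_eq0 => /eqP fm.
exists (inf S); split => // v av fv; apply: ge_inf => //.
by split => //=; rewrite fv subrr.
Qed.
End RealFacts.

Section Polynomial.
Variable R : realType.

Definition Tpoly (K d : nat) : {poly R} :=
  \sum_(j < K) ((K - j)%:R * 'C(d, j)%:R)%:P * ('X^(d - j) * (1 - 'X) ^+ j).

(* Derivative at 1 of u^n (1-u)^j: only j = 0 and j = 1 contribute, because
   (1-u)^j vanishes to order j at 1. *)
Lemma deriv_term_at1 n j :
  (('X^n * (1 - 'X) ^+ j)^`() : {poly R}).[1] = n%:R * (j == 0)%:R - (j == 1)%:R.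
Proof.
rewrite derivM derivXn deriv_exp derivB derivC derivX sub0r.
rewrite !(hornerE, hornerMn) /= subrr !expr1n mul1r.
by case: j => [|[|j]]; rewrite /= ?expr0n ?mulr0 ?mul0rn ?mulr0n ?mulr1n ?mulr1
  /= ?addr0 ?subr0.
Qed.

Lemma Tl_Tpoly K d (lam u : R) : Tl K d lam u = lam / K%:R * (Tpoly K d).[u].
Proof.
rewrite /Tl /Tpoly horner_sum; congr (_ * _); apply: eq_bigr => j _.
by rewrite !hornerE.
Qed.

(* At u = 1 only the j = 0 term survives. *)
Lemma Tpoly_at1 K d : (1 <= K)%N -> (Tpoly K d).[1] = K%:R.
Proof.
case: K => // k _; rewrite /Tpoly horner_sum big_ord_recl big1 ?addr0.
  by rewrite !hornerE /= subn0 bin0 expr1n !mulr1.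
by move=> i _; rewrite !hornerE /= subrr expr0n /= !mulr0.
Qed.

(* The j = 0 and j = 1 terms give K d - (K-1) d = d. *)
Lemma Tpoly_deriv_at1 K d : (1 <= K)%N -> ((Tpoly K d)^`()).[1] = d%:R.
Proof.
move=> K1; rewrite /Tpoly raddf_sum horner_sum.
under eq_bigr => j _ do
  rewrite /= deriv_mulC hornerM hornerC deriv_term_at1.
case: K K1 => [//|k _]; rewrite big_ord_recl /= !subn0 bin0 !mulr1 subr0.
case: k => [|k]; first by rewrite big_ord0 addr0 mul1r.
rewrite big_ord_recl big1 /= ?addr0; last first.
  by move=> i _; rewrite !mulr0 sub0r mulrN mulr0 oppr0.
rewrite bin1 mulr0 sub0r mulrN1 subSS subn0.
by rewrite [k.+2%:R]mulrS mulrDl mul1r addrK.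
Qed.
End Polynomial.

Section Model.
Variables (R : realType) (K d : nat).
Hypothesis K_ge1 : (1 <= K)%N.
Hypothesis K_lt_d : (K < d)%N.

Definition Fpoly : {poly R} := K%:R^-1 *: Tpoly R K d.
Local Notation F := (horner Fpoly).

Lemma Tl_Fpoly (lam u : R) : Tl K d lam u = lam * F u.
Proof. by rewrite Tl_Tpoly hornerZ mulrA. Qed.

Lemma Fpoly_at1 : F 1 = 1.
Proof. by rewrite hornerZ Tpoly_at1 // mulVf // pnatr_eq0 -lt0n. Qed.

Lemma Fpoly_slope_at1 : 'D_1 F 1 = d%:R / K%:R.
Proof. by rewrite derive_val derivZ hornerZ Tpoly_deriv_at1 // mulrC. Qed.

Lemma Fpoly_slope_gt1 : 1 < 'D_1 F 1.
Proof. by rewrite Fpoly_slope_at1 ltr_pdivlMr ?ltr0n // mul1r ltr_nat. Qed.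

Lemma fixed_point_near1 (u1 lam : R) : 1 < u1 -> u1 < F u1 ->
  u1 / F u1 < lam -> lam < 1 -> exists u, [/\ 1 < u, u <= u1 & Tl K d lam u = u].
Proof.
move=> u1_gt1 u1_lt_F lam_gt lam_lt1.
have F_pos : 0 < F u1 by lra.
have [u [u_gt1 u_le fixed]] : exists u, [/\ 1 < u, u <= u1 & lam * F u = u].
  apply: fixed_point_between (ltW u1_gt1) _ _.
  - by move=> x; apply: cvgM; [exact: cvg_cst | exact: continuous_horner].
  - by rewrite Fpoly_at1 mulr1.
  - by rewrite -ltr_pdivrMr.
by exists u; rewrite Tl_Fpoly.
Qed.

Lemma min_sol_exists (lam : R) : (exists u, 1 < u /\ Tl K d lam u = u) ->
  exists m, is_min_sol K d lam m.
Proof.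
move=> [u [u_gt1 fixed]].
have cont : continuous (fun v => lam * F v).
  by move=> x; apply: cvgM; [exact: cvg_cst | exact: continuous_horner].
have fixed_ge1 : exists v, 1 <= v /\ lam * F v = v.
  by exists u; rewrite -Tl_Fpoly; split => //; exact: ltW.
have [m [m_ge1 m_fixed m_least]] := least_fixed_point cont fixed_ge1.
exists m; rewrite /is_min_sol Tl_Fpoly; split; [by [] | split => // v v_ge1].
by rewrite Tl_Fpoly; exact: m_least.
Qed.

Lemma min_sol_cvg (lbar : R) (ul : R -> R) : lbar < 1 ->
  (forall lam, lbar < lam -> lam < 1 -> is_min_sol K d lam (ul lam)) ->
  ul lam @[lam --> (1:R)^'-] --> (1:R).
Proof.
move=> lbar_lt1 ul_min; apply/cvgrPdist_lt => e e_pos.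
have [u1 [u1_gt1 u1_close u1_lt_F]] :=
  above_diagonal_near Fpoly_at1 (@derivable_horner _ _ _) Fpoly_slope_gt1 e_pos.
have thr_lt1 : u1 / F u1 < 1 by rewrite ltr_pdivrMr ?mul1r //; lra.
near=> lam.
have lam_lt1 : lam < 1 by near: lam; exact: nbhs_left_lt.
have lam_gt_thr : u1 / F u1 < lam by near: lam; exact: nbhs_left_gt.
have lam_gt_lbar : lbar < lam by near: lam; exact: nbhs_left_gt.
have [u [u_gt1 u_le fixed]] := fixed_point_near1 u1_gt1 u1_lt_F lam_gt_thr lam_lt1.
have [m_ge1 [_ m_least]] := ul_min lam lam_gt_lbar lam_lt1.
have := m_least u (ltW u_gt1) fixed.
by rewrite ltr_norml; lra.
Unshelve. all: by end_near. Qed.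

Lemma hl_cvg_at_left (ul : R -> R) (eps : R) : ul lam @[lam --> (1:R)^'-] --> (1:R) ->
  hl K d lam (ul lam) eps @[lam --> (1:R)^'-] --> (1 - F (1 - eps)) / eps.
Proof.
move=> ul_cvg; rewrite -[F (1 - eps)]mul1r /hl; under eq_fun do rewrite Tl_Fpoly.
apply: cvgM; last exact: cvg_cst.
apply: cvgB => //; apply: cvgM.
  exact: cvg_at_left_filter cvg_id.
apply: continuous_cvg; first exact: continuous_horner.
by apply: cvgB => //; exact: cvg_cst.
Qed.

End Model.

(* The threshold lbar = u0/F(u0) comes from one point 1 < u0 < F(u0). *)
Theorem lemma3p4 (R : realType) (K d : nat) (hK1 : (1 <= K)%N) (hKd : (K < d)%N) :
  exists lbar : R, 0 <= lbar /\ lbar < 1 /\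
    (forall lam : R, lbar < lam -> lam < 1 ->
       (exists u : R, 1 < u /\ Tl K d lam u = u) /\
       (exists m : R, is_min_sol K d lam m)) /\
    (forall ul : R -> R,
       (forall lam : R, lbar < lam -> lam < 1 -> is_min_sol K d lam (ul lam)) ->
       (ul lam @[lam --> (1:R)^'-] --> (1:R)) /\
       (exists g : R -> R,
          (\forall eps \near (0:R)^'+,
             hl K d lam (ul lam) eps @[lam --> (1:R)^'-] --> g eps) /\
          (g eps @[eps --> (0:R)^'+] --> (d%:R / K%:R : R)))).
Proof.
have F_derivable : derivable (horner (Fpoly R K d)) 1 1 by exact: derivable_horner.
have [u0 [u0_gt1 _ u0_lt_F]] :=
  above_diagonal_near (Fpoly_at1 R d hK1) F_derivable (Fpoly_slope_gt1 R hK1 hKd) ltr01.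
have lbar_lt1 : u0 / (Fpoly R K d).[u0] < 1 by rewrite ltr_pdivrMr ?mul1r //; lra.
exists (u0 / (Fpoly R K d).[u0]); split; first by rewrite ltW // divr_gt0 //; lra.
split => //; split => [lam lam_gt lam_lt1 | ul ul_min].
  have [u [u_gt1 _ fixed]] := fixed_point_near1 hK1 u0_gt1 u0_lt_F lam_gt lam_lt1.
  have sol : exists u, 1 < u /\ Tl K d lam u = u by exists u.
  by split => //; exact: min_sol_exists.
have ul_cvg := min_sol_cvg hK1 hKd lbar_lt1 ul_min.
split => //.
exists (fun eps => (1 - (Fpoly R K d).[1 - eps]) / eps); split.
  by apply: nearW => eps; exact: hl_cvg_at_left.
have := left_diff_quotient_cvg F_derivable.
by rewrite (Fpoly_at1 R d hK1) (Fpoly_slope_at1 R d hK1).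
Qed.
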